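(* Let $\varepsilon>0$, $0\le\tau\le\varepsilon$, $\lambda:=\tau/\varepsilon$, and define on $\mathcal V_{[0,1]}$ \[ H(u):= \lambda\langle u,\mathbf{1}-u\rangle_{\mathcal V} +\left\langle u,\left(I-e^{-\tau\Delta}\right)u\right\rangle_{\mathcal V}. \] Then $H(u)\ge0$ for all $u\in\mathcal V_{[0,1]}$. Moreover, if $u_0\in\mathcal V_{[0,1]}$ and $(u_n)_{n\ge0}$, together with some $\beta_{n+1}\in\mathcal B(u_{n+1})$, satisfies for each $n$ \[ u_{n+1} -e^{-\tau\Delta}u_n-\lambda u_{n+1}+\lambda\overline{u_{n+1}}\mathbf{1} =\lambda\beta_{n+1} -\lambda\overline{\beta_{n+1}}\mathbf{1}, \] then $H(u_{n+1})\le H(u_n)$ with equality if and only if $u_{n+1}=u_n$, and \[ H(u_n)-H(u_{n+1}) \geq (1-\lambda)\|u_{n+1}-u_n\|^2_{\mathcal V}. \]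
   Context: $G=(V,E)$ is a finite, simple, connected, undirected graph with weights $\omega_{ij}=\omega_{ji}>0$ for $ij\in E$, $\omega_{ij}=0$ otherwise; $d_i=\sum_j\omega_{ij}$, $r\in[0,1]$ fixed. $\mathcal V$ = functions $V\to\mathbb R$ with $\langle u,v\rangle_{\mathcal V}=\sum_i u_iv_id_i^r$ and norm $\|\cdot\|_{\mathcal V}$; $\mathcal V_{[0,1]}$ = functions $V\to[0,1]$. $(\Delta u)_i=d_i^{-r}\sum_j\omega_{ij}(u_i-u_j)$, $e^{-\tau\Delta}$ its matrix exponential. $\mathbf 1$ all-ones; $\mathcal M(u)=\langle u,\mathbf 1\rangle_{\mathcal V}$; $\bar v=\mathcal M(v)/\mathcal M(\mathbf 1)$. For $u\in\mathcal V_{[0,1]}$, $\mathcal B(u)$ = set of $\beta\in\mathcal V$ with $\beta_i\ge0$ if $u_i=0$, $\beta_i=0$ if $0<u_i<1$, $\beta_i\le0$ if $u_i=1$; $\mathcal B(u)=\emptyset$ otherwise. *)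

From HB Require Import structures.
From mathcomp Require Import all_boot all_order all_algebra.
From mathcomp Require Import all_classical all_reals all_analysis.
Set Implicit Arguments. Unset Strict Implicit. Unset Printing Implicit Defensive.
Import Order.TTheory GRing.Theory Num.Theory.
Local Open Scope ring_scope.

Section GraphDefs.
Variables (R : realType) (n : nat).
Implicit Types (w : 'I_n -> 'I_n -> R) (u v : 'I_n -> R) (A : 'M[R]_n).

Definition weighted_graph w : Prop :=
  [/\ forall i j, w i j = w j i, forall i j, 0 <= w i j, forall i, w i i = 0
    & forall i j, connect [rel a b | 0 < w a b] i j].

Definition deg w (i : 'I_n) : R := \sum_(j < n) w i j.

(* graph Laplacian (Delta u)_i = d_i^{-r} sum_j w_ij (u_i - u_j), as a matrix *)
Definition laplacian w (r : R) : 'M[R]_n :=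
  \matrix_(i, j) ((deg w i `^ r)^-1 * ((i == j)%:R * deg w i - w i j)).

Definition mpow A (k : nat) : 'M[R]_n := iter k (mulmx A) 1%:M.
Definition expm A : 'M[R]_n :=
  \matrix_(i, j) limn (fun N : nat => \sum_(k < N) (mpow A k) i j / (k`!)%:R).

Definition matvec A u : 'I_n -> R := fun i => \sum_(j < n) A i j * u j.

Definition ipV w (r : R) u v : R := \sum_(i < n) u i * v i * deg w i `^ r.
Definition normV2 w (r : R) u : R := ipV w r u u.

Definition one_fn : 'I_n -> R := fun _ => 1.
Definition massV w r u : R := ipV w r u one_fn.
Definition meanV w r v : R := massV w r v / massV w r one_fn.

Definition in01 u : Prop := forall i, 0 <= u i <= 1.

(* beta \in B(u); B(u) is empty unless u \in V_[0,1] *)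
Definition inB u (beta : 'I_n -> R) : Prop :=
  in01 u /\ forall i, [/\ u i = 0 -> 0 <= beta i,
                          0 < u i < 1 -> beta i = 0 & u i = 1 -> beta i <= 0].

Definition Hfun w r (lam tau : R) u : R :=
  lam * ipV w r u (fun i => 1 - u i)
  + ipV w r u (fun i => u i - matvec (expm (- tau *: laplacian w r)) u i).

End GraphDefs.

(* Write A = e^{-tau Delta} and W = diag(d_i^r). Since W Delta is symmetric
   with zero row sums and nonpositive off-diagonal entries, A is self-adjoint
   for the d^r-weighted inner product, stochastic and entrywise nonnegative,
   and A = B^2 with B = e^{-tau Delta / 2} self-adjoint and invertible.
   Stochasticity and nonnegativity give <u, A u> <= <u, u>, hence H >= 0.
   The scheme conserves mass, and expanding H(u_n) - H(u_{n+1}) with it gives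
     (1 - lambda) |d|^2 + <d, A d> - 2 lambda <d, beta_{n+1}>,
   d = u_{n+1} - u_n, where <d, A d> = |B d|^2 vanishes only for d = 0 and
   <d, beta_{n+1}> <= 0 by the sign conditions defining B(u_{n+1}). *)

From HB Require Import structures.
From mathcomp Require Import all_boot all_order all_algebra.
From mathcomp Require Import all_classical all_reals all_analysis.
From mathcomp Require Import ring lra.

Import Order.TTheory GRing.Theory Num.Theory.
Import numFieldNormedType.Exports.
Local Open Scope ring_scope.
Local Open Scope classical_set_scope.

Lemma sum_antidiagonals (V : zmodType) (f : nat -> nat -> V) N :
  \sum_(k < N) \sum_(i < k.+1) f (k - i)%N i =
  \sum_(a < N) \sum_(b < N | (a + b < N)%N) f a b.
Proof.
elim: N => [|N IH]; first by rewrite !big_ord0.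
rewrite big_ord_recr /= IH.
have -> : \sum_(a < N.+1) \sum_(b < N.+1 | (a + b < N.+1)%N) f a b =
    \sum_(a < N.+1) \sum_(b < N.+1) ((if (a + b < N)%N then f a b else 0)
                                    + (if (a + b == N)%N then f a b else 0)).
  apply: eq_bigr => a _; rewrite big_mkcond; apply: eq_bigr => b _.
  by rewrite ltnS leq_eqVlt; case: ltngtP; rewrite /= ?addr0 ?add0r.
under [RHS]eq_bigr do rewrite big_split.
rewrite big_split /=; congr (_ + _).
  rewrite [RHS]big_ord_recr /= [X in _ + X]big1 ?addr0; last first.
    by move=> b _; rewrite ltnNge leq_addr.
  apply: eq_bigr => a _; rewrite [RHS]big_ord_recr /= ltnNge leq_addl addr0.
  by rewrite big_mkcond.
rewrite (reindex_inj rev_ord_inj) /=; apply: eq_bigr => i _.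
have iN : (N - i < N.+1)%N by rewrite ltnS leq_subr.
rewrite (bigD1 (Ordinal iN)) //= big1 ?addr0.
  have iN' : (i <= N)%N by rewrite -ltnS.
  by rewrite subSS subnKC // eqxx subKn.
move=> b; rewrite -val_eqE /= => neb; case: ifP => // /eqP E.
have Eb : (N - i)%N = b by move: E => /(congr1 (subn^~ i)); rewrite addKn.
by rewrite Eb eqxx in neb.
Qed.

Lemma invfact_binomial (R : numFieldType) (k i : nat) : (i <= k)%N ->
  (k`!%:R : R)^-1 * 'C(k, i)%:R = ((k - i)`!%:R)^-1 * (i`!%:R)^-1.
Proof.
move=> ik; rewrite -(bin_fact ik) !natrM.
have fact_neq0 j : (j`!%:R : R) != 0 by rewrite pnatr_eq0 -lt0n fact_gt0.
have bin_neq0 : ('C(k, i)%:R : R) != 0 by rewrite pnatr_eq0 -lt0n bin_gt0.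
by field; rewrite !fact_neq0 bin_neq0.
Qed.

Section ExpPartialSums.
Context {R : realType} {A : algType R}.

Definition exp_partial N (x : A) : A := \sum_(k < N) (k`!%:R)^-1 *: x ^+ k.

Lemma exp_partialM_comm N x y : GRing.comm x y ->
  exp_partial N x * exp_partial N y - exp_partial N (x + y) =
  \sum_(a < N) \sum_(b < N | (N <= a + b)%N)
     (((a`!%:R)^-1 * (b`!%:R)^-1) *: (x ^+ a * y ^+ b)).
Proof.
move=> cxy; pose F a b := ((a`!%:R)^-1 * (b`!%:R)^-1) *: (x ^+ a * y ^+ b).
have -> : exp_partial N x * exp_partial N y = \sum_(a < N) \sum_(b < N) F a b.
  rewrite mulr_suml; apply: eq_bigr => a _; rewrite mulr_sumr.
  by apply: eq_bigr => b _; rewrite -scalerAl -scalerAr scalerA.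
have -> : exp_partial N (x + y) = \sum_(a < N) \sum_(b < N | (a + b < N)%N) F a b.
  rewrite -sum_antidiagonals; apply: eq_bigr => k _.
  rewrite exprDn_comm // scaler_sumr; apply: eq_bigr => i _.
  by rewrite -(@scaler_nat R A) scalerA invfact_binomial // -ltnS.
rewrite -sumrB; apply: eq_bigr => a _.
rewrite (bigID (fun b : 'I_N => (N <= a + b)%N)) /=.
by under [X in _ + X - _]eq_bigl => b do rewrite -ltnNge; rewrite addrK.
Qed.

End ExpPartialSums.

Definition selfadj {R : numDomainType} {n : nat} (d : 'I_n -> R) (A : 'M[R]_n) :=
  forall i j, d i * A i j = d j * A j i.

Lemma selfadjZ {R : numDomainType} {n : nat} (d : 'I_n -> R) (c : R) (A : 'M[R]_n) :
  selfadj d A -> selfadj d (c *: A).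
Proof. by move=> sA i j; rewrite !mxE mulrCA sA mulrCA. Qed.

Section MatrixExponential.
Context {R : realType} {m : nat}.
Local Notation M := 'M[R]_m.+1.
Implicit Types (A B P Q X : M) (c : R).

Definition mxl1 A : R := \sum_i \sum_j `|A i j|.

Lemma mxl1_ge0 A : 0 <= mxl1 A.
Proof. by apply: sumr_ge0 => i _; apply: sumr_ge0. Qed.

Lemma mxl1_row A i : \sum_j `|A i j| <= mxl1 A.
Proof.
rewrite /mxl1 [leRHS](bigD1 i) //= lerDl.
by apply: sumr_ge0 => k _; apply: sumr_ge0.
Qed.

Lemma mxl1_entry A i j : `|A i j| <= mxl1 A.
Proof.
apply: le_trans (mxl1_row A i).
by rewrite (bigD1 j) //= lerDl; apply: sumr_ge0.
Qed.

Lemma mxl10 : mxl1 0 = 0.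
Proof. by rewrite /mxl1 big1 // => i _; rewrite big1 // => j _; rewrite mxE normr0. Qed.

Lemma mxl1D A B : mxl1 (A + B) <= mxl1 A + mxl1 B.
Proof.
rewrite /mxl1 -big_split; apply: ler_sum => i _; rewrite -big_split.
by apply: ler_sum => j _; rewrite mxE ler_normD.
Qed.

Lemma mxl1_sum (I : Type) (r : seq I) (P : pred I) (F : I -> M) :
  mxl1 (\sum_(i <- r | P i) F i) <= \sum_(i <- r | P i) mxl1 (F i).
Proof.
elim/big_rec2: _ => [|i y1 y2 _ h]; first by rewrite mxl10.
by apply: le_trans (mxl1D _ _) _; rewrite lerD2l.
Qed.

Lemma mxl1Z c A : mxl1 (c *: A) = `|c| * mxl1 A.
Proof.
rewrite /mxl1 mulr_sumr; apply: eq_bigr => i _; rewrite mulr_sumr.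
by apply: eq_bigr => j _; rewrite mxE normrM.
Qed.

Lemma mxl1M A B : mxl1 (A *m B) <= mxl1 A * mxl1 B.
Proof.
rewrite /mxl1 mulr_suml; apply: ler_sum => i _.
apply: (@le_trans _ _ (\sum_j \sum_l `|A i l| * `|B l j|)).
  apply: ler_sum => j _; rewrite mxE; apply: le_trans (ler_norm_sum _ _ _) _.
  by apply: ler_sum => l _; rewrite normrM.
rewrite exchange_big /= mulr_suml; apply: ler_sum => l _.
by rewrite -mulr_sumr ler_wpM2l // mxl1_row.
Qed.

Lemma mxl1X A k : mxl1 (A ^+ k) <= mxl1 1 * mxl1 A ^+ k.
Proof.
elim: k => [|k IH]; first by rewrite !expr0 mulr1.
rewrite exprSr -mulmxE; apply: le_trans (mxl1M _ _) _.
by rewrite exprSr mulrA ler_wpM2r // mxl1_ge0.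
Qed.

Lemma exp_partial_entry N A i j :
  exp_partial N A i j = \sum_(k < N) (k`!%:R)^-1 * (A ^+ k) i j.
Proof. by rewrite summxE; apply: eq_bigr => k _; rewrite mxE. Qed.

Lemma expmE A i j : expm A i j = limn (fun N => exp_partial N A i j).
Proof.
rewrite mxE; congr (limn _); apply/funext => N; rewrite exp_partial_entry.
have mpowE k : mpow A k = A ^+ k by elim: k => [|k IH] //=; rewrite IH exprS.
by apply: eq_bigr => k _; rewrite mpowE mulrC.
Qed.

Lemma is_cvg_exp_partial A i j : cvgn (fun N => exp_partial N A i j).
Proof.
pose g k := (k`!%:R)^-1 * (A ^+ k) i j.
have -> : (fun N => exp_partial N A i j) = series g.
  by apply/funext => N; rewrite exp_partial_entry /series /= big_mkord.
apply: normed_cvg.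
apply: (@series_le_cvg _ _ (fun k => mxl1 1 * exp_coeff (mxl1 A) k)).
- by move=> k /=.
- by move=> k; rewrite mulr_ge0 ?mxl1_ge0 ?exp_coeff_ge0 ?mxl1_ge0.
- move=> k; rewrite /g /exp_coeff /= normrM ger0_norm ?invr_ge0 ?ler0n //.
  rewrite mulrCA mulrA [_ * _^-1]mulrC ler_wpM2l ?invr_ge0 ?ler0n // mulrC.
  exact: le_trans (mxl1_entry _ i j) (mxl1X _ _).
exact/is_cvg_seriesZ/is_cvg_series_exp_coeff.
Qed.

Lemma cvg_expm A i j : exp_partial N A i j @[N --> \oo] --> expm A i j.
Proof. by rewrite expmE; exact: is_cvg_exp_partial. Qed.

Lemma expm_lim A B :
  (forall i j, exp_partial N A i j @[N --> \oo] --> B i j) -> expm A = B.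
Proof.
by move=> AB; apply/matrixP => i j; exact: cvg_unique _ (cvg_expm A i j) (AB i j).
Qed.

Lemma cvg_exp_partial_scalar c : (exp_partial N (c : R^o) : R) @[N --> \oo] --> expR c.
Proof.
have -> : (fun N => exp_partial N (c : R^o) : R) = series (exp_coeff c).
  apply/funext => N; rewrite /series /= big_mkord.
  by apply: eq_bigr => k _; rewrite /exp_coeff /= mulrC.
exact: is_cvg_series_exp_coeff.
Qed.

Lemma mxl1_exp_partial_defect N P Q : P *m Q = Q *m P ->
  mxl1 (exp_partial N P * exp_partial N Q - exp_partial N (P + Q))
  <= mxl1 1 ^+ 2 * (exp_partial N (mxl1 P : R^o) * exp_partial N (mxl1 Q : R^o)
                    - exp_partial N (mxl1 P + mxl1 Q : R^o)).
Proof.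
move=> cPQ; rewrite !exp_partialM_comm //; last exact: mulrC.
apply: le_trans (mxl1_sum _ _ _ _) _; rewrite mulr_sumr; apply: ler_sum => a _.
apply: le_trans (mxl1_sum _ _ _ _) _; rewrite mulr_sumr; apply: ler_sum => b _.
have coef_ge0 : 0 <= ((a`!%:R)^-1 * (b`!%:R)^-1 : R).
  by rewrite mulr_ge0 // invr_ge0 ler0n.
rewrite mxl1Z ger0_norm // [X in _ <= _ * X]/GRing.scale /= mulrCA.
rewrite ler_wpM2l //; apply: le_trans (mxl1M _ _) _.
by rewrite expr2 mulrACA; apply: ler_pM; rewrite ?mxl1_ge0 ?mxl1X.
Qed.

(* The Cauchy-product defect of the partial sums of [expm P] and [expm Q] is
   dominated by that of the scalar series at [mxl1 P] and [mxl1 Q], which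
   tends to [expR p * expR q - expR (p + q) = 0]. *)
Lemma expm_add P Q : P *m Q = Q *m P -> expm (P + Q) = expm P *m expm Q.
Proof.
move=> cPQ; apply: expm_lim => i j.
pose p := mxl1 P; pose q := mxl1 Q; pose c := mxl1 (1 : M).
pose defect N : R := exp_partial N (p : R^o) * exp_partial N (q : R^o)
                     - exp_partial N (p + q : R^o).
have defect_cvg0 : defect N @[N --> \oo] --> 0.
  rewrite -(subrr (expR (p + q))) [X in X - _]expRD.
  by apply: cvgB; [apply: cvgM|]; exact: cvg_exp_partial_scalar.
have defect_bound N :
    `|(exp_partial N P * exp_partial N Q - exp_partial N (P + Q)) i j|
    <= c ^+ 2 * defect N.
  exact: le_trans (mxl1_entry _ i j) (mxl1_exp_partial_defect N P Q cPQ).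
have mul_cvg : (exp_partial N P * exp_partial N Q) i j @[N --> \oo]
               --> (expm P *m expm Q) i j.
  under eq_cvg do rewrite -mulmxE mxE.
  by rewrite mxE; apply: cvg_big => //=; [exact: add_continuous|
    move=> l _; apply: cvgM; exact: cvg_expm].
have -> : (fun N => exp_partial N (P + Q) i j) = fun N =>
    (exp_partial N P * exp_partial N Q) i j
    - (exp_partial N P * exp_partial N Q - exp_partial N (P + Q)) i j.
  by apply/funext => N; rewrite !mxE; ring.
rewrite -[X in _ --> X]subr0; apply: cvgB mul_cvg _.
apply: (@squeeze_cvgr _ _ _ _ (fun N => - (c ^+ 2 * defect N))
                               (fun N => c ^+ 2 * defect N)).
- by apply: nearW => N; rewrite -ler_norml defect_bound.
- rewrite -oppr0 -(mulr0 (c ^+ 2)); apply: cvgN.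
  by apply: cvgM; [exact: cvg_cst | exact: defect_cvg0].
- rewrite -(mulr0 (c ^+ 2)).
  by apply: cvgM; [exact: cvg_cst | exact: defect_cvg0].
Qed.

Lemma exp_partialS0 N : exp_partial N.+1 (0 : M) = 1.
Proof.
rewrite /exp_partial big_ord_recl big1 ?addr0 ?expr0 ?invr1 ?scale1r //.
by move=> k _; rewrite expr0n scaler0.
Qed.

Lemma expm0 : expm (0 : M) = 1.
Proof.
apply: expm_lim => i j; apply: cvg_near_cst.
by exists 1%N => // -[|N] _ //; rewrite exp_partialS0.
Qed.

Lemma expmN_mul A : expm (- A) *m expm A = 1%:M.
Proof. by rewrite -expm_add ?mulNmx ?mulmxN // addNr expm0. Qed.

Lemma expm_scalar c : expm (c%:M : M) = (expR c)%:M.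
Proof.
apply: expm_lim => i j; rewrite mxE -mulr_natr.
have -> : (fun N => exp_partial N (c%:M : M) i j)
          = fun N => exp_partial N (c : R^o) * (i == j)%:R.
  apply/funext => N.
  have -> : exp_partial N (c%:M : M) = (exp_partial N (c : R^o) : R)%:M.
    rewrite /exp_partial raddf_sum; apply: eq_bigr => k _.
    by rewrite -rmorphXn scale_scalar_mx.
  by rewrite mxE mulr_natr.
by apply: cvgMr_tmp; exact: cvg_exp_partial_scalar.
Qed.

Lemma expm_ge0 A : (forall i j, 0 <= A i j) -> forall i j, 0 <= expm A i j.
Proof.
move=> A_ge0.
have pow_ge0 k i j : 0 <= (A ^+ k) i j.
  elim: k i j => [|k IH] i j; first by rewrite expr0 mxE ler0n.
  by rewrite exprSr -mulmxE mxE; apply: sumr_ge0 => l _; exact: mulr_ge0.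
move=> i j; rewrite expmE; apply: limr_ge; first exact: is_cvg_exp_partial.
apply: nearW => N; rewrite exp_partial_entry; apply: sumr_ge0 => k _.
by rewrite mulr_ge0 ?invr_ge0 ?ler0n.
Qed.

Lemma expm_offdiag_ge0 A : (forall i j, i != j -> 0 <= A i j) ->
  forall i j, 0 <= expm A i j.
Proof.
move=> offdiag_ge0.
pose c := \sum_i `|A i i|.
have shift_ge0 i j : 0 <= (A + c%:M) i j.
  rewrite !mxE; have [<-|/offdiag_ge0] := eqVneq i j; last by rewrite addr0.
  have : `|A i i| <= c by rewrite /c (bigD1 i) //= lerDl; apply: sumr_ge0.
  by rewrite mulr1n; have := ler_norm (- A i i); rewrite normrN; lra.
have -> : A = (A + c%:M) + (- c)%:M by rewrite raddfN /= addrK.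
rewrite expm_add; last by rewrite scalar_mxC.
move=> i j; rewrite expm_scalar mul_mx_scalar mxE.
by rewrite mulr_ge0 ?expR_ge0 ?expm_ge0.
Qed.

Lemma selfadj_expm {d : 'I_m.+1 -> R} {A} : selfadj d A -> selfadj d (expm A).
Proof.
move=> sA.
have sAX k : selfadj d (A ^+ k).
  elim: k => [|k IH] i j.
    by rewrite expr0 !mxE; case: eqVneq => [->|]; rewrite ?mulr0.
  rewrite [in LHS]exprSr [in RHS]exprS -!mulmxE !mxE !mulr_sumr.
  apply: eq_bigr => l _.
  by rewrite mulrA IH -mulrA mulrCA sA mulrCA [X in d j * X]mulrC.
move=> i j.
have lhs : d i * exp_partial N A i j @[N --> \oo] --> d i * expm A i j.
  by apply: cvgMl_tmp; exact: cvg_expm.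
have rhs : d j * exp_partial N A j i @[N --> \oo] --> d j * expm A j i.
  by apply: cvgMl_tmp; exact: cvg_expm.
have sym_partial : (fun N => d i * exp_partial N A i j)
                   = fun N => d j * exp_partial N A j i.
  apply/funext => N; rewrite !exp_partial_entry !mulr_sumr.
  by apply: eq_bigr => k _; rewrite mulrCA sAX mulrCA.
by rewrite sym_partial in lhs; exact: cvg_unique _ lhs rhs.
Qed.

Lemma expm_stochastic A : (forall i, \sum_j A i j = 0) ->
  forall i, \sum_j expm A i j = 1.
Proof.
move=> A_rows0 i.
have pow_rows0 k : \sum_j (A ^+ k.+1) i j = 0.
  under eq_bigr do rewrite exprSr -mulmxE mxE.
  by rewrite exchange_big /= big1 // => l _; rewrite -mulr_sumr A_rows0 mulr0.
have rows_partial N : \sum_j exp_partial N.+1 A i j = 1.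
  under eq_bigr do rewrite exp_partial_entry.
  rewrite exchange_big big_ord_recl /= [X in _ + X]big1 ?addr0 => [|k _].
    rewrite -mulr_sumr (bigD1 i) //= big1 ?addr0 => [|j /negPf ji].
      by rewrite expr0 mxE eqxx fact0 invr1 mulr1.
    by rewrite expr0 mxE eq_sym ji.
  by rewrite -mulr_sumr /bump /= add1n pow_rows0 mulr0.
have sum_cvg : \sum_j exp_partial N A i j @[N --> \oo] --> \sum_j expm A i j.
  by apply: cvg_big => //; [exact: add_continuous | move=> j _; exact: cvg_expm].
have one_cvg : \sum_j exp_partial N A i j @[N --> \oo] --> (1 : R).
  by apply: cvg_near_cst; exists 1%N => // -[|N] _ //; exact: rows_partial.
exact: cvg_unique _ sum_cvg one_cvg.
Qed.

End MatrixExponential.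

Section WeightedInnerProduct.
Context {R : realType} {n : nat} (d : 'I_n -> R).
Implicit Types (A B : 'M[R]_n) (u v : 'I_n -> R).

Definition wip u v : R := \sum_i u i * v i * d i.

Lemma matvecM A B u : matvec (A *m B) u = matvec A (matvec B u).
Proof.
apply/funext => i; rewrite /matvec.
under eq_bigr do rewrite mxE mulr_suml.
rewrite exchange_big /=; apply: eq_bigr => l _; rewrite mulr_sumr.
by apply: eq_bigr => j _; rewrite mulrA.
Qed.

Lemma matvec1 u : matvec 1%:M u = u.
Proof.
apply/funext => i; rewrite /matvec (bigD1 i) //= big1 ?addr0 => [|j /negPf ji].
  by rewrite mxE eqxx mul1r.
by rewrite mxE eq_sym ji mul0r.
Qed.

Lemma wip_matvec_selfadj A u v : selfadj d A ->
  wip u (matvec A v) = wip (matvec A u) v.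
Proof.
move=> sA; rewrite /wip /matvec.
under eq_bigr do rewrite mulr_sumr mulr_suml.
under [RHS]eq_bigr do rewrite !mulr_suml.
rewrite exchange_big /=; apply: eq_bigr => j _; apply: eq_bigr => i _.
by transitivity (u i * v j * (d i * A i j)); [ring | rewrite sA; ring].
Qed.

Lemma matvec_stochastic A : (forall i, \sum_j A i j = 1) ->
  matvec A (fun=> 1) = (fun=> 1).
Proof.
by move=> A1; apply/funext => i; rewrite /matvec; under eq_bigr do rewrite mulr1.
Qed.

Lemma wip_matvec_one A v : selfadj d A -> (forall i, \sum_j A i j = 1) ->
  wip (matvec A v) (fun=> 1) = wip v (fun=> 1).
Proof.
by move=> sA A1; rewrite -wip_matvec_selfadj // matvec_stochastic.
Qed.

Hypothesis d_gt0 : forall i, 0 < d i.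

Lemma wip_ge0 u : 0 <= wip u u.
Proof. by apply: sumr_ge0 => i _; rewrite -expr2 mulr_ge0 ?sqr_ge0 ?ltW. Qed.

Lemma wip_eq0 u : wip u u = 0 -> u = fun=> 0.
Proof.
move=> /eqP; rewrite psumr_eq0 => [/allP u0|i _]; last first.
  by rewrite -expr2 mulr_ge0 ?sqr_ge0 ?ltW.
apply/funext => i; have /(_ (mem_index_enum i)) := u0 i.
by rewrite /= mulf_eq0 (gt_eqF (d_gt0 i)) orbF mulf_eq0 orbb => /eqP.
Qed.

(* [wip u u - wip u (matvec A u)] is half of
   [\sum_(i, j) d i * A i j * (u i - u j) ^+ 2]. *)
Lemma wip_matvec_le A u : selfadj d A -> (forall i, \sum_j A i j = 1) ->
  (forall i j, 0 <= A i j) -> wip u (matvec A u) <= wip u u.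
Proof.
move=> sA A1 A_ge0.
pose c i j := d i * A i j.
have wip_rows : wip u u = \sum_i \sum_j u i ^+ 2 * c i j.
  by apply: eq_bigr => i _; rewrite -mulr_sumr -mulr_sumr A1; ring.
have wip_cols : wip u u = \sum_i \sum_j u j ^+ 2 * c i j.
  rewrite exchange_big /=; apply: eq_bigr => j _; rewrite /c.
  under eq_bigr do rewrite sA.
  by rewrite -mulr_sumr -mulr_sumr A1; ring.
have wip_cross : wip u (matvec A u) = \sum_i \sum_j u i * u j * c i j.
  apply: eq_bigr => i _; rewrite /matvec mulr_sumr mulr_suml.
  by apply: eq_bigr => j _; rewrite /c; ring.
suff : 2 * wip u (matvec A u) <= wip u u + wip u u by lra.
rewrite {1}wip_rows wip_cols wip_cross mulr_sumr -big_split /=.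
apply: ler_sum => i _; rewrite mulr_sumr -big_split /=; apply: ler_sum => j _.
have c_ge0 : 0 <= c i j by rewrite mulr_ge0 // ltW.
have := sqr_ge0 (u i - u j); nra.
Qed.

End WeightedInnerProduct.

Section ExpmQuadraticForm.
Context {R : realType} {m : nat} {d : 'I_m.+1 -> R}.
Implicit Types (X : 'M[R]_m.+1) (x : 'I_m.+1 -> R).

Lemma wip_expm_half X x : selfadj d X ->
  wip d x (matvec (expm X) x)
  = wip d (matvec (expm (2^-1 *: X)) x) (matvec (expm (2^-1 *: X)) x).
Proof.
move=> sX; have halves : X = 2^-1 *: X + 2^-1 *: X.
  by rewrite -scalerDl -[2^-1]div1r -splitr scale1r.
rewrite {1}halves expm_add // matvecM wip_matvec_selfadj //.
exact/selfadj_expm/selfadjZ.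
Qed.

Hypothesis d_gt0 : forall i, 0 < d i.

Lemma wip_expm_ge0 {X} : selfadj d X -> forall x, 0 <= wip d x (matvec (expm X) x).
Proof. by move=> sX x; rewrite wip_expm_half // wip_ge0. Qed.

Lemma wip_expm_eq0 {X} : selfadj d X ->
  forall x, wip d x (matvec (expm X) x) = 0 -> x = fun=> 0.
Proof.
move=> sX x; rewrite wip_expm_half // => /(wip_eq0 _ d_gt0) half0.
rewrite -(matvec1 x) -(expmN_mul (2^-1 *: X)) matvecM half0.
by apply/funext => i; rewrite /matvec big1 // => j _; rewrite mulr0.
Qed.

End ExpmQuadraticForm.

Section Energy.
Context {R : realType} {m : nat} (d : 'I_m.+1 -> R) (A : 'M[R]_m.+1) (lam : R).
Implicit Types (u v b : 'I_m.+1 -> R).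

Definition energy u : R :=
  lam * wip d u (fun i => 1 - u i) + wip d u (fun i => u i - matvec A u i).

Definition wmean u : R := wip d u (fun=> 1) / wip d (fun=> 1) (fun=> 1).

Hypothesis d_gt0 : forall i, 0 < d i.
Hypothesis A_selfadj : selfadj d A.
Hypothesis A_stochastic : forall i, \sum_j A i j = 1.
Hypothesis lam_ge0 : 0 <= lam.

Lemma energy_ge0 u : (forall i j, 0 <= A i j) -> in01 u -> 0 <= energy u.
Proof.
move=> A_ge0 u01; apply: addr_ge0.
  apply/mulr_ge0/sumr_ge0 => // i _; have /andP[u0 u1] := u01 i.
  by rewrite mulr_ge0 ?mulr_ge0 ?subr_ge0 // ltW.
have -> : wip d u (fun i => u i - matvec A u i) = wip d u u - wip d u (matvec A u).
  by rewrite /wip -sumrB; apply: eq_bigr => i _; ring.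
by rewrite subr_ge0 wip_matvec_le.
Qed.

Lemma wip_sub_inB_le0 {u v b} : inB u b -> in01 v -> wip d (fun i => u i - v i) b <= 0.
Proof.
move=> [u01 b_sign] v01; apply: sumr_le0 => i _.
rewrite pmulr_lle0 ?d_gt0 //.
have [b_ge0 b_eq0 b_le0] := b_sign i.
have /andP[v0 v1] := v01 i; have /andP[u0 u1] := u01 i.
have [u_eq0|u_neq0] := eqVneq (u i) 0.
  by rewrite u_eq0 sub0r mulNr oppr_le0 mulr_ge0 ?b_ge0.
have [u_eq1|u_neq1] := eqVneq (u i) 1.
  by rewrite u_eq1 mulr_ge0_le0 ?subr_ge0 ?b_le0.
by rewrite b_eq0 ?mulr0 // !lt_neqAle eq_sym u_neq0 u_neq1 u0 u1.
Qed.

Lemma wip_one_gt0 : 0 < wip d (fun=> 1) (fun=> 1).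
Proof.
rewrite /wip (bigD1 ord0) //= !mul1r ltr_pwDl //.
by apply: sumr_ge0 => i _; rewrite !mul1r ltW.
Qed.

Lemma scheme_matvec {u v b} :
  (forall i, u i - matvec A v i - lam * u i + lam * wmean u
             = lam * b i - lam * wmean b) ->
  forall i, matvec A v i = (1 - lam) * u i - lam * b i + lam * (wmean u + wmean b).
Proof. by move=> step i; have := step i; lra. Qed.

Lemma scheme_mass {u v b} :
  (forall i, matvec A v i = (1 - lam) * u i - lam * b i + lam * (wmean u + wmean b)) ->
  wip d (fun i => u i - v i) (fun=> 1) = 0.
Proof.
move=> Av; have S_neq0 := lt0r_neq0 wip_one_gt0.
have mass_mean w : wmean w * wip d (fun=> 1) (fun=> 1) = wip d w (fun=> 1).
  by rewrite /wmean divfK.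
have mass_Av : wip d (matvec A v) (fun=> 1) = (1 - lam) * wip d u (fun=> 1)
    - lam * wip d b (fun=> 1) + lam * (wmean u + wmean b) * wip d (fun=> 1) (fun=> 1).
  rewrite /wip !mulr_sumr -sumrB -big_split /=; apply: eq_bigr => i _.
  by rewrite Av; ring.
have -> : wip d (fun i => u i - v i) (fun=> 1) = wip d u (fun=> 1) - wip d v (fun=> 1).
  by rewrite /wip -sumrB; apply: eq_bigr => i _; ring.
rewrite -(wip_matvec_one _ _ v A_selfadj A_stochastic) mass_Av -mulrA.
rewrite [(wmean u + _) * _]mulrDl !mass_mean.
ring.
Qed.

(* Expanding both energies with the scheme leaves, besides the three terms
   below, a multiple of the mass of [D] and [wip v (A D) - wip (A v) D], which
   vanish by [scheme_mass] and self-adjointness. *)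
Lemma energy_sub_scheme {u v b} :
  (forall i, matvec A v i = (1 - lam) * u i - lam * b i + lam * (wmean u + wmean b)) ->
  let D i := u i - v i in
  energy v - energy u
  = (1 - lam) * wip d D D + wip d D (matvec A D) - 2 * lam * wip d D b.
Proof.
move=> Av D; have mass0 : wip d D (fun=> 1) = 0 := scheme_mass Av.
have Au i : matvec A u i = matvec A v i + matvec A D i.
  by rewrite /matvec -big_split; apply: eq_bigr => j _ /=; rewrite /D; ring.
have -> : energy v - energy u
    = (1 - lam) * wip d D D + wip d D (matvec A D) - 2 * lam * wip d D b
      + ((2 * lam * (wmean u + wmean b) - lam) * wip d D (fun=> 1)
         + (wip d v (matvec A D) - wip d (matvec A v) D)).
  rewrite /energy /wip !mulr_sumr -?sumrB -?big_split -?sumrB -?big_split.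
  by apply: eq_bigr => i _ /=; rewrite Au Av /D; ring.
by rewrite mass0 mulr0 add0r (wip_matvec_selfadj _ _ v D A_selfadj) subrr addr0.
Qed.

Lemma energy_scheme_step {u v b} :
  (forall x, 0 <= wip d x (matvec A x)) ->
  (forall x, wip d x (matvec A x) = 0 -> x = fun=> 0) -> lam <= 1 ->
  in01 v -> inB u b ->
  (forall i, u i - matvec A v i - lam * u i + lam * wmean u
             = lam * b i - lam * wmean b) ->
  [/\ energy u <= energy v, energy u = energy v <-> u = v
    & (1 - lam) * wip d (fun i => u i - v i) (fun i => u i - v i)
      <= energy v - energy u].
Proof.
move=> A_psd A_posdef lam_le1 v01 ub step.
have /= energy_diff := energy_sub_scheme (scheme_matvec step).
set D := fun i => u i - v i in energy_diff *.
have Db_le0 : 2 * lam * wip d D b <= 0.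
  by rewrite mulr_ge0_le0 ?mulr_ge0 ?(wip_sub_inB_le0 ub v01).
have DAD_ge0 := A_psd D.
have DD_ge0 : 0 <= (1 - lam) * wip d D D by rewrite mulr_ge0 ?subr_ge0 ?wip_ge0.
split; [lra | split => [energy_eq | ->] // | lra].
have /A_posdef D0 : wip d D (matvec A D) = 0 by lra.
by apply/funext => i; apply/eqP; rewrite -subr_eq0 -/(D i) D0.
Qed.

End Energy.

Section GraphLaplacian.
Context {R : realType} {m : nat} (w : 'I_m.+1 -> 'I_m.+1 -> R) (r : R).
Hypothesis w_graph : weighted_graph w.

Lemma deg_gt0 : (0 < m)%N -> forall i, 0 < deg w i.
Proof.
move: w_graph => [_ w_ge0 _ w_conn] m_gt0 i.
have [j ji] : exists j : 'I_m.+1, j != i.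
  have [->|i_neq0] := eqVneq i ord0; last by exists ord0; rewrite eq_sym.
  by exists ord_max; rewrite -val_eqE /= -lt0n.
case/connectP: (w_conn i j) => -[/= _ j_eq_i|k p /= /andP[w_ik _] _].
  by rewrite j_eq_i eqxx in ji.
rewrite /deg (bigD1 k) //= ltr_pwDl //.
by apply: sumr_ge0 => l _; exact: w_ge0.
Qed.

Lemma laplacian_selfadj : (0 < m)%N ->
  selfadj (fun i => deg w i `^ r) (laplacian w r).
Proof.
move: w_graph => [w_sym _ _ _] /deg_gt0 deg_pos i j.
have pow_neq0 k : deg w k `^ r != 0 by rewrite gt_eqF ?powR_gt0.
rewrite !mxE !mulrA !divff // !mul1r eq_sym w_sym.
by case: eqVneq => [->|]; rewrite ?mul0r.
Qed.

Lemma laplacian_rows0 i : \sum_j laplacian w r i j = 0.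
Proof.
under eq_bigr do rewrite mxE.
rewrite -mulr_sumr sumrB (bigD1 i) //= eqxx mul1r big1 ?addr0 ?subrr ?mulr0 //.
by move=> j /negPf ji; rewrite eq_sym ji mul0r.
Qed.

Lemma laplacian_offdiag_le0 i j : i != j -> laplacian w r i j <= 0.
Proof.
move: w_graph => [_ w_ge0 _ _] /negPf ij; rewrite mxE ij mul0r sub0r mulrN oppr_le0.
by rewrite mulr_ge0 ?invr_ge0 ?powR_ge0.
Qed.

End GraphLaplacian.

Theorem theorem33 (R : realType) (n : nat) (w : 'I_n -> 'I_n -> R) (r : R)
  (eps tau : R) :
  (2 <= n)%N -> weighted_graph w -> 0 <= r <= 1 ->
  0 < eps -> 0 <= tau <= eps ->
  let lam := tau / eps in
  (forall u : 'I_n -> R, in01 u -> 0 <= Hfun w r lam tau u) /\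
  (forall (u beta : nat -> 'I_n -> R),
     in01 (u 0%N) ->
     (forall k : nat, inB (u k.+1) (beta k.+1) /\
        forall i, u k.+1 i - matvec (expm (- tau *: laplacian w r)) (u k) i
                  - lam * u k.+1 i + lam * meanV w r (u k.+1)
                = lam * beta k.+1 i - lam * meanV w r (beta k.+1)) ->
     forall k : nat,
       [/\ Hfun w r lam tau (u k.+1) <= Hfun w r lam tau (u k),
           Hfun w r lam tau (u k.+1) = Hfun w r lam tau (u k) <-> u k.+1 = u k
         & Hfun w r lam tau (u k) - Hfun w r lam tau (u k.+1)
             >= (1 - lam) * normV2 w r (fun i => u k.+1 i - u k i)]).
Proof.
case: n w => [|m] // w m_gt0 w_graph _ eps_gt0 /andP[tau_ge0 tau_le_eps] lam.
pose d i := deg w i `^ r.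
have d_gt0 i : 0 < d i by rewrite powR_gt0 ?deg_gt0.
pose X := - tau *: laplacian w r.
have X_selfadj : selfadj d X by apply/selfadjZ/laplacian_selfadj.
have A_selfadj := selfadj_expm X_selfadj.
have A_stochastic : forall i, \sum_j expm X i j = 1.
  apply: expm_stochastic => i; under eq_bigr do rewrite mxE.
  by rewrite -mulr_sumr laplacian_rows0 mulr0.
have A_ge0 : forall i j, 0 <= expm X i j.
  apply: expm_offdiag_ge0 => i j /(laplacian_offdiag_le0 _ r w_graph) L_le0.
  by rewrite mxE mulr_le0 ?oppr_le0.
have lam_ge0 : 0 <= lam by rewrite divr_ge0 // ltW.
have lam_le1 : lam <= 1 by rewrite ler_pdivrMr ?mul1r.
split=> [u u01 | u beta u0_01 scheme k].
  exact: (energy_ge0 _ _ _ d_gt0 A_selfadj A_stochastic lam_ge0 _ A_ge0 u01).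
have [beta_sign step] := scheme k.
have uk_01 : in01 (u k) by case: k {beta_sign step} => // k; have [[]] := scheme k.
exact: (energy_scheme_step _ _ _ d_gt0 A_selfadj A_stochastic lam_ge0
          (wip_expm_ge0 d_gt0 X_selfadj) (wip_expm_eq0 d_gt0 X_selfadj)
          lam_le1 uk_01 beta_sign step).
Qed.
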